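(* (Truth lemma) Let $\Phi$ be the closure $cl(\varphi_0)$ of a formula and $M^*$ the canonical model for $\Phi$. For every $w\in W^*$ and every $\varphi\in\Phi$, $M^*,w\vDash\varphi$ iff $\varphi\in w$.
   Context: $\mathcal{L}_{AIL}$: $\varphi::=p\mid\neg\varphi\mid\varphi\wedge\varphi\mid A_i\varphi\mid I_i\varphi\mid E_i\varphi\mid[\approx]_i\varphi\mid[\circ^+]_i\varphi$ (countable atoms $\mathcal{P}$, finite agents $\mathcal{G}$). Hilbert system $\mathbf{AIL}$: axioms — propositional tautologies; $A_i\varphi\leftrightarrow A_i\neg\varphi$; $A_i(\varphi\wedge\psi)\leftrightarrow A_i\varphi\wedge A_i\psi$; $A_i\varphi\leftrightarrow A_iO_j\varphi$ for $O_j\in\{A_j,I_j,[\approx]_j,[\circ^+]_j,E_j\}$; $A_i\varphi\to I_iA_i\varphi$; $\neg A_i\varphi\to I_i\neg A_i\varphi$; $A_ip\wedge p\to[\approx]_ip$; for $\Box\in\{I_i,[\approx]_i\}$: $\Box(\varphi\to\psi)\to(\Box\varphi\to\Box\psi)$, $\Box\varphi\to\varphi$, $\neg\Box\varphi\to\Box\neg\Box\varphi$; $[\circ^+]_i(\varphi\to\psi)\to([\circ^+]_i\varphi\to[\circ^+]_i\psi)$; $[\circ^+]_i\varphi\to\varphi\wedge[\approx]_iI_i[\circ^+]_i\varphi$; $[\circ^+]_i(\varphi\to[\approx]_iI_i\varphi)\to(\varphi\to[\circ^+]_i\varphi)$; $E_i\varphi\leftrightarrow A_i\varphi\wedge[\circ^+]_i\varphi$;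 rules: modus ponens, necessitation for $I_i,[\approx]_i,[\circ^+]_i$. $\Gamma\vdash\varphi$ iff $\vdash\bigwedge\Gamma'\to\varphi$ for some finite $\Gamma'\subseteq\Gamma$. $cl(\varphi_0)$ is the smallest set containing $\varphi_0$ closed under: subformulas; $\neg\psi$ for non-negations $\psi$; $A_i\psi\Rightarrow A_i\chi$ for subformulas $\chi$ of $\psi$; $A_i\psi\Rightarrow I_iA_i\psi,I_i\neg A_i\psi,[\approx]_ip$ for atoms $p$ in $\psi$; $I_i\psi\Rightarrow I_iI_i\psi,I_i\neg I_i\psi$ unless $\psi$ is $I_i\chi$ or $\neg I_i\chi$; analogously for $[\approx]_i$; $[\circ^+]_i\psi\Rightarrow[\approx]_iI_i[\circ^+]_i\psi$; $E_i\psi\Rightarrow A_i\psi,[\circ^+]_i\psi$. The canonical model for $\Phi$: $W^*$ = set of maximal consistent sets in $\Phi$ (subsets $\Gamma\subseteq\Phi$ with $\Gamma\nvdash\bot$ not properly extendable within $\Phi$); $(\Gamma,\Delta)\in\sim_i^*$ iff $\{\psi:I_i\psi\in\Gamma\}\subseteq\Delta$; $(\Gamma,\Delta)\in\approx_i^*$ iff $\{\psi:[\approx]_i\psi\in\Gamma\}\subseteq\Delta$; $V^*(p)=\{\Gamma:p\in\Gamma\}$; $\mathscr{A}_i^*(\Gamma)=\{p:A_ip\in\Gamma\}$. Satisfaction in $M^*$: $p$ iff $w\in V^*(p)$; Boolean usual; $A_i\varphi$ iff every atom occurring in $\varphi$ is in $\mathscr{A}_i^*(w)$; $I_i\varphi$,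 $[\approx]_i\varphi$, $[\circ^+]_i\varphi$ iff $\varphi$ holds at every $v$ with $(w,v)$ in $\sim_i^*$, $\approx_i^*$, $(\sim_i^*\circ\approx_i^* )^+$ respectively, where $\sim_i^*\circ\approx_i^*=\{(w,v):\exists t\,((w,t)\in\approx_i^*,(t,v)\in\sim_i^* )\}$ and $^+$ is transitive closure; $E_i\varphi$ iff $A_i\varphi$ and $[\circ^+]_i\varphi$ hold at $w$. *)

From Stdlib Require Import List Relations.
Import ListNotations.
Set Implicit Arguments.

Inductive form (Ag : Type) : Type :=
| Atom : nat -> form Ag
| Neg  : form Ag -> form Ag
| And  : form Ag -> form Ag -> form Ag
| Aw   : Ag -> form Ag -> form Ag
| Inf  : Ag -> form Ag -> form Ag
| Ind  : Ag -> form Ag -> form Ag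
| Cp   : Ag -> form Ag -> form Ag
| Ex   : Ag -> form Ag -> form Ag.
Arguments Atom {Ag} _.

Definition Imp {Ag} (a b : form Ag) : form Ag := Neg (And a (Neg b)).
Definition Iff {Ag} (a b : form Ag) : form Ag := And (Imp a b) (Imp b a).
Definition Bot {Ag} : form Ag := And (Atom 0) (Neg (Atom 0)).
Definition Top {Ag} : form Ag := Neg Bot.

(* Propositional tautologies: true under every Boolean valuation of the
   non-Boolean (atomic or modal) subformulas. *)
Fixpoint peval {Ag} (v : form Ag -> bool) (f : form Ag) : bool :=
  match f with
  | Neg a => negb (peval v a)
  | And a b => andb (peval v a) (peval v b)
  | _ => v f
  end.
Definition tautology {Ag} (f : form Ag) : Prop := forall v, peval v f = true.

Inductive prov {Ag} : form Ag -> Prop :=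
| ax_taut : forall f, tautology f -> prov f
| ax_A_neg : forall i f, prov (Iff (Aw i f) (Aw i (Neg f)))
| ax_A_and : forall i f g, prov (Iff (Aw i (And f g)) (And (Aw i f) (Aw i g)))
| ax_A_A : forall i j f, prov (Iff (Aw i f) (Aw i (Aw j f)))
| ax_A_I : forall i j f, prov (Iff (Aw i f) (Aw i (Inf j f)))
| ax_A_Ind : forall i j f, prov (Iff (Aw i f) (Aw i (Ind j f)))
| ax_A_Cp : forall i j f, prov (Iff (Aw i f) (Aw i (Cp j f)))
| ax_A_E : forall i j f, prov (Iff (Aw i f) (Aw i (Ex j f)))
| ax_A_intro : forall i f, prov (Imp (Aw i f) (Inf i (Aw i f)))
| ax_nA_intro : forall i f, prov (Imp (Neg (Aw i f)) (Inf i (Neg (Aw i f))))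
| ax_A_atom : forall i p, prov (Imp (And (Aw i (Atom p)) (Atom p)) (Ind i (Atom p)))
| ax_I_K : forall i f g, prov (Imp (Inf i (Imp f g)) (Imp (Inf i f) (Inf i g)))
| ax_I_T : forall i f, prov (Imp (Inf i f) f)
| ax_I_5 : forall i f, prov (Imp (Neg (Inf i f)) (Inf i (Neg (Inf i f))))
| ax_Ind_K : forall i f g, prov (Imp (Ind i (Imp f g)) (Imp (Ind i f) (Ind i g)))
| ax_Ind_T : forall i f, prov (Imp (Ind i f) f)
| ax_Ind_5 : forall i f, prov (Imp (Neg (Ind i f)) (Ind i (Neg (Ind i f))))
| ax_Cp_K : forall i f g, prov (Imp (Cp i (Imp f g)) (Imp (Cp i f) (Cp i g)))
| ax_Cp_fix : forall i f, prov (Imp (Cp i f) (And f (Ind i (Inf i (Cp i f)))))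
| ax_Cp_ind : forall i f,
    prov (Imp (Cp i (Imp f (Ind i (Inf i f)))) (Imp f (Cp i f)))
| ax_E : forall i f, prov (Iff (Ex i f) (And (Aw i f) (Cp i f)))
| r_mp : forall f g, prov (Imp f g) -> prov f -> prov g
| r_nec_I : forall i f, prov f -> prov (Inf i f)
| r_nec_Ind : forall i f, prov f -> prov (Ind i f)
| r_nec_Cp : forall i f, prov f -> prov (Cp i f).

Fixpoint bigAnd {Ag} (l : list (form Ag)) : form Ag :=
  match l with
  | [] => Top
  | x :: l' => And x (bigAnd l')
  end.

Definition derives {Ag} (G : form Ag -> Prop) (f : form Ag) : Prop :=
  exists l, (forall x, In x l -> G x) /\ prov (Imp (bigAnd l) f).

Inductive subf {Ag} (c : form Ag) : form Ag -> Prop :=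
| sf_refl : subf c c
| sf_neg : forall a, subf c a -> subf c (Neg a)
| sf_andl : forall a b, subf c a -> subf c (And a b)
| sf_andr : forall a b, subf c b -> subf c (And a b)
| sf_Aw : forall i a, subf c a -> subf c (Aw i a)
| sf_Inf : forall i a, subf c a -> subf c (Inf i a)
| sf_Ind : forall i a, subf c a -> subf c (Ind i a)
| sf_Cp : forall i a, subf c a -> subf c (Cp i a)
| sf_Ex : forall i a, subf c a -> subf c (Ex i a).

Definition occurs {Ag} (p : nat) (f : form Ag) : Prop := subf (Atom p) f.

Inductive cl {Ag} (f0 : form Ag) : form Ag -> Prop :=
| cl_base : cl f0 f0
| cl_sub : forall f c, cl f0 f -> subf c f -> cl f0 c
| cl_neg : forall f, cl f0 f -> (forall c, f <> Neg c) -> cl f0 (Neg f)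
| cl_A_sub : forall i f c, cl f0 (Aw i f) -> subf c f -> cl f0 (Aw i c)
| cl_A_IA : forall i f, cl f0 (Aw i f) -> cl f0 (Inf i (Aw i f))
| cl_A_InA : forall i f, cl f0 (Aw i f) -> cl f0 (Inf i (Neg (Aw i f)))
| cl_A_atom : forall i f p, cl f0 (Aw i f) -> occurs p f -> cl f0 (Ind i (Atom p))
| cl_I_I : forall i f, cl f0 (Inf i f) ->
    ~ (exists c, f = Inf i c \/ f = Neg (Inf i c)) -> cl f0 (Inf i (Inf i f))
| cl_I_nI : forall i f, cl f0 (Inf i f) ->
    ~ (exists c, f = Inf i c \/ f = Neg (Inf i c)) -> cl f0 (Inf i (Neg (Inf i f)))
| cl_Ind_Ind : forall i f, cl f0 (Ind i f) ->
    ~ (exists c, f = Ind i c \/ f = Neg (Ind i c)) -> cl f0 (Ind i (Ind i f))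
| cl_Ind_nInd : forall i f, cl f0 (Ind i f) ->
    ~ (exists c, f = Ind i c \/ f = Neg (Ind i c)) -> cl f0 (Ind i (Neg (Ind i f)))
| cl_Cp : forall i f, cl f0 (Cp i f) -> cl f0 (Ind i (Inf i (Cp i f)))
| cl_E_A : forall i f, cl f0 (Ex i f) -> cl f0 (Aw i f)
| cl_E_Cp : forall i f, cl f0 (Ex i f) -> cl f0 (Cp i f).

Definition mcs {Ag} (Phi G : form Ag -> Prop) : Prop :=
  (forall x, G x -> Phi x) /\ ~ derives G Bot /\
  (forall D : form Ag -> Prop, (forall x, G x -> D x) -> (forall x, D x -> Phi x) ->
     (exists x, D x /\ ~ G x) -> derives D Bot).

Definition W {Ag} (Phi : form Ag -> Prop) : Type := { G : form Ag -> Prop | mcs Phi G }.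

Definition simR {Ag} {Phi : form Ag -> Prop} (i : Ag) (w v : W Phi) : Prop :=
  forall f, proj1_sig w (Inf i f) -> proj1_sig v f.
Definition indR {Ag} {Phi : form Ag -> Prop} (i : Ag) (w v : W Phi) : Prop :=
  forall f, proj1_sig w (Ind i f) -> proj1_sig v f.
Definition compR {Ag} {Phi : form Ag -> Prop} (i : Ag) (w v : W Phi) : Prop :=
  exists t, indR i w t /\ simR i t v.
Definition cpR {Ag} {Phi : form Ag -> Prop} (i : Ag) : relation (W Phi) :=
  clos_trans (W Phi) (compR i).

Definition awset {Ag} {Phi : form Ag -> Prop} (i : Ag) (w : W Phi) (p : nat) : Prop :=
  proj1_sig w (Aw i (Atom p)).

Fixpoint sat {Ag} {Phi : form Ag -> Prop} (w : W Phi) (f : form Ag) {struct f} : Prop :=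
  match f with
  | Atom p => proj1_sig w (Atom p)
  | Neg a => ~ sat w a
  | And a b => sat w a /\ sat w b
  | Aw i a => forall p, occurs p a -> awset i w p
  | Inf i a => forall v, simR i w v -> sat v a
  | Ind i a => forall v, indR i w v -> sat v a
  | Cp i a => forall v, cpR i w v -> sat v a
  | Ex i a => (forall p, occurs p a -> awset i w p) /\ (forall v, cpR i w v -> sat v a)
  end.

From Stdlib Require Import List Relations Classical.
Import ListNotations.
Set Implicit Arguments.

(* Since there are finitely many agents, cl(phi0) is finite: the introspection
   rules nest I_i and [≈]_i at most twice.  Hence every set consistent with a
   formula extends to a maximal consistent set along an enumeration of
   cl(phi0), and the truth lemma goes by induction on formulas.  Awareness
   A_i commutes with all connectives by its axioms, so it is decided by the
   atoms; I_i and [≈]_i are normal modalities whose canonical relations are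
   complete by the usual existence argument.  For [o+]_i, suppose phi holds at
   every world reachable from w and let chi be the disjunction of the
   characteristic formulas of these (finitely many up to cl(phi0)) worlds.
   Then chi -> phi is provable, and so is chi -> [≈]_i I_i chi, because every
   successor of a reachable world is reachable; the induction axiom gives
   chi -> [o+]_i phi, and chi holds at w. *)

Lemma list_filter_prop {A : Type} (P : A -> Prop) (l : list A) :
  exists s, forall z, In z s <-> In z l /\ P z.
Proof.
  induction l as [|y l [s Hs]]; [exists []; simpl; tauto|].
  destruct (classic (P y)) as [Hy|Hy]; [exists (y :: s)|exists s];
    intro z; simpl; rewrite Hs; intuition congruence.
Qed.

Fixpoint sublists {A : Type} (l : list A) : list (list A) :=
  match l with
  | [] => [[]]
  | x :: r => flat_map (fun s => [x :: s; s]) (sublists r)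
  end.

Lemma sublists_filter_prop {A : Type} (P : A -> Prop) (l : list A) :
  exists s, In s (sublists l) /\ forall z, In z s <-> In z l /\ P z.
Proof.
  induction l as [|y l [s [Hs Hsz]]]; [exists []; cbn; tauto|].
  destruct (classic (P y)) as [Hy|Hy]; [exists (y :: s)|exists s];
    (split; [apply in_flat_map; exists s; cbn; tauto|]);
    intro z; cbn; rewrite Hsz; intuition congruence.
Qed.

Definition sem_imp {Ag : Type} (a b : form Ag) : Prop :=
  forall v, peval v a = true -> peval v b = true.

Ltac taut :=
  unfold sem_imp, tautology; intros;
  repeat match goal with H : context [peval _ _] |- _ => revert H end;
  cbn [bigAnd]; unfold Top, Iff, Imp, Bot; cbn [peval];
  repeat match goal with
  | |- context [peval ?v ?x] => destruct (peval v x)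
  | |- context [?v ?x] =>
      is_var v; lazymatch type of v with form _ -> bool => destruct (v x) end
  end; cbn; intros; try discriminate; auto.

Section Propositional.
Context {Ag : Type}.
Implicit Types a b c x : form Ag.

Lemma prov_taut_imp a b : sem_imp a b -> prov (Imp a b).
Proof.
  intro Hab; apply ax_taut; intro v. specialize (Hab v). revert Hab. taut.
Qed.

Lemma prov_sem a b : prov a -> sem_imp a b -> prov b.
Proof. intros Ha Hab. exact (r_mp (prov_taut_imp Hab) Ha). Qed.

Lemma prov_and a b : prov a -> prov b -> prov (And a b).
Proof.
  intros Ha Hb. refine (r_mp (prov_sem Ha (b := Imp b (And a b)) _) Hb). taut.
Qed.

Lemma prov_sem2 a b c : prov a -> prov b -> sem_imp (And a b) c -> prov c.
Proof. intros Ha Hb. exact (prov_sem (prov_and Ha Hb)). Qed.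

Lemma peval_bigAnd v (l : list (form Ag)) : peval v (bigAnd l) = forallb (peval v) l.
Proof. induction l as [|x l IH]; cbn; [taut|now rewrite IH]. Qed.

Lemma bigAnd_sem_imp (l1 l2 : list (form Ag)) :
  (forall x, In x l2 -> In x l1) -> sem_imp (bigAnd l1) (bigAnd l2).
Proof. intros Hs v. rewrite !peval_bigAnd, !forallb_forall. auto. Qed.

Fixpoint bigOr (l : list (form Ag)) : form Ag :=
  match l with
  | [] => Bot
  | x :: r => Neg (And (Neg x) (Neg (bigOr r)))
  end.

Lemma bigOr_intro {x l} : In x l -> prov (Imp x (bigOr l)).
Proof.
  induction l as [|y l IH]; [intros []|intros [<-|Hx]]; cbn [bigOr].
  - apply prov_taut_imp. taut.
  - refine (prov_sem (IH Hx) _). taut.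
Qed.

Lemma bigOr_elim c l : (forall x, In x l -> prov (Imp x c)) -> prov (Imp (bigOr l) c).
Proof.
  induction l as [|y l IH]; intro H; cbn [bigOr].
  - apply prov_taut_imp. taut.
  - refine (prov_sem2 (H y (or_introl eq_refl)) (IH (fun x Hx => H x (or_intror Hx))) _).
    taut.
Qed.

End Propositional.

Section Derivability.
Context {Ag : Type}.
Implicit Types a b c x : form Ag.
Implicit Types G H : form Ag -> Prop.

Lemma derives_in {G a} : G a -> derives G a.
Proof.
  intro Ha. exists [a]. split; [intros y [<-|[]]; exact Ha|].
  apply prov_taut_imp. taut.
Qed.

Lemma derives_mono {G H a} : (forall x, G x -> H x) -> derives G a -> derives H a.
Proof. intros HGH [l [Hl Hp]]. exists l; auto. Qed.

Lemma derives_prov G a b : derives G a -> prov (Imp a b) -> derives G b.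
Proof.
  intros [l [Hl Hp]] Hab. exists l. split; [exact Hl|].
  refine (prov_sem2 Hp Hab _). taut.
Qed.

Lemma derives_sem G a b : derives G a -> sem_imp a b -> derives G b.
Proof. intros Ha Hab. exact (derives_prov Ha (prov_taut_imp Hab)). Qed.

Lemma derives_and G a b : derives G a -> derives G b -> derives G (And a b).
Proof.
  intros [l1 [Hl1 Hp1]] [l2 [Hl2 Hp2]]. exists (l1 ++ l2). split.
  - intros y Hy. apply in_app_iff in Hy as [Hy|Hy]; auto.
  - refine (prov_sem2 Hp1 Hp2 _). intro v. cbn [peval]. unfold Imp. cbn [peval].
    rewrite !peval_bigAnd, forallb_app.
    destruct (forallb (peval v) l1), (forallb (peval v) l2), (peval v a), (peval v b); auto.
Qed.

Lemma derives_sem2 G a b c : derives G a -> derives G b -> sem_imp (And a b) c -> derives G c.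
Proof. intros Ha Hb. exact (derives_sem (derives_and Ha Hb)). Qed.

Lemma derives_ded {G a b} : derives (fun z => G z \/ z = a) b -> derives G (Imp a b).
Proof.
  intros [l [Hl Hp]]. destruct (list_filter_prop G l) as [l' Hl'].
  exists l'. split; [intros x Hx; apply Hl', Hx|].
  assert (Hsub : forall x, In x l -> In x (a :: l')).
  { intros x Hx. destruct (Hl x Hx) as [HG| ->]; [right; apply Hl'; auto|now left]. }
  refine (prov_sem Hp _). intro v. pose proof (bigAnd_sem_imp _ _ Hsub v). taut.
Qed.

End Derivability.

Section NormalBox.
Context {Ag : Type}.
Variable B : form Ag -> form Ag.
Hypothesis B_nec : forall f, prov f -> prov (B f).
Hypothesis B_K : forall f g, prov (Imp (B (Imp f g)) (Imp (B f) (B g))).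

Lemma box_mono a b : prov (Imp a b) -> prov (Imp (B a) (B b)).
Proof. intro Hab. exact (r_mp (B_K a b) (B_nec Hab)). Qed.

Lemma box_bigAnd (l : list (form Ag)) : prov (Imp (bigAnd (map B l)) (B (bigAnd l))).
Proof.
  induction l as [|x l IH]; cbn [bigAnd map].
  - refine (prov_sem (B_nec (ax_taut (f := Top) _)) _); taut.
  - assert (Hx : prov (Imp (B x) (B (Imp (bigAnd l) (And x (bigAnd l)))))).
    { apply box_mono, prov_taut_imp. taut. }
    refine (prov_sem2 Hx (prov_and (B_K (bigAnd l) (And x (bigAnd l))) IH) _). taut.
Qed.

End NormalBox.

Section MaximalConsistent.
Context {Ag : Type} (Phi : form Ag -> Prop).
Implicit Types a b : form Ag.
Implicit Types G : form Ag -> Prop.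

Lemma mcs_refutes G a : mcs Phi G -> Phi a -> ~ G a -> derives G (Imp a Bot).
Proof.
  intros [HPhi [_ Hmax]] Ha Hna. apply derives_ded, Hmax.
  - intros x Hx; now left.
  - intros x [Hx| ->]; auto.
  - exists a; auto.
Qed.

Lemma mcs_closed G a : mcs Phi G -> derives G a -> Phi a -> G a.
Proof.
  intros HG Hd Ha. apply NNPP. intro Hna. apply (proj1 (proj2 HG)).
  refine (derives_sem2 Hd (mcs_refutes HG Ha Hna) _). taut.
Qed.

Lemma mcs_neg G a : mcs Phi G -> Phi a -> Phi (Neg a) -> (G (Neg a) <-> ~ G a).
Proof.
  intros HG Ha Hna. split.
  - intros Hn Hp. apply (proj1 (proj2 HG)).
    refine (derives_sem2 (derives_in Hp) (derives_in Hn) _). taut.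
  - intro Hn. apply (mcs_closed HG); [|exact Hna].
    refine (derives_sem (mcs_refutes HG Ha Hn) _). taut.
Qed.

End MaximalConsistent.

Section Lindenbaum.
Context {Ag : Type} (Phi : form Ag -> Prop) (L : list (form Ag)).
Hypothesis Phi_in_L : forall f, Phi f -> In f L.
Hypothesis Phi_neg : forall f, Phi f -> (forall c, f <> Neg c) -> Phi (Neg f).
Hypothesis Phi_neg_inv : forall f, Phi (Neg f) -> Phi f.
Implicit Types a b x y psi : form Ag.
Implicit Types V X : form Ag -> Prop.

(* [psi] need not lie in [Phi]; it is used as the negation of a formula outside
   [Phi] that the extension must not derive. *)
Definition consistent_with V psi : Prop := ~ derives (fun z => V z \/ z = psi) Bot.

Lemma consistent_with_anti {V X psi} :
  (forall y, X y -> V y) -> consistent_with V psi -> consistent_with X psi.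
Proof.
  intros HXV HV Hd. apply HV. refine (derives_mono _ Hd). intros y [Hy|Hy]; auto.
Qed.

Lemma inconsistent_with_refutes {V x psi} :
  ~ consistent_with (fun z => V z \/ z = x) psi ->
  derives (fun z => V z \/ z = psi) (Imp x Bot).
Proof.
  intro Hn. apply derives_ded. apply NNPP in Hn. refine (derives_mono _ Hn). tauto.
Qed.

Lemma extend_along psi (l : list (form Ag)) : forall X,
  (forall y, X y -> Phi y) -> consistent_with X psi ->
  exists V, (forall y, X y -> V y) /\ (forall y, V y -> Phi y) /\ consistent_with V psi /\
    (forall x, In x l -> Phi x -> V x \/ ~ consistent_with (fun z => V z \/ z = x) psi).
Proof.
  induction l as [|x l IH]; intros X HX HXc.
  - exists X. repeat split; auto.
  - destruct (classic (Phi x /\ consistent_with (fun z => X z \/ z = x) psi))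
      as [[Hx Hxc]|Hnx].
    + destruct (IH (fun z => X z \/ z = x)) as [V [HXV [HV [HVc Hmax]]]];
        [intros y [Hy| ->]; auto|exact Hxc|].
      exists V. repeat split; auto.
      intros y [<-|Hy] Hy'; [left; apply HXV; now right|auto].
    + destruct (IH X HX HXc) as [V [HXV [HV [HVc Hmax]]]].
      exists V. repeat split; auto.
      intros y [<-|Hy] Hy'; [|auto].
      right. intro Hc. apply Hnx. split; [exact Hy'|].
      refine (consistent_with_anti _ Hc). intros z [Hz|Hz]; auto.
Qed.

Definition negp f : form Ag := match f with Neg b => b | _ => Neg f end.

Lemma negp_Phi f : Phi f -> Phi (negp f).
Proof.
  destruct f; cbn; intro Hf; auto; apply Phi_neg; auto; intros c Hc; discriminate.
Qed.

Lemma negp_refutes f : sem_imp (And (Imp f Bot) (Imp (negp f) Bot)) Bot.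
Proof. destruct f; cbn [negp]; taut. Qed.

Lemma negp_contradicts f : sem_imp (And f (negp f)) Bot.
Proof. destruct f; cbn [negp]; taut. Qed.

Lemma lindenbaum X psi : (forall y, X y -> Phi y) -> consistent_with X psi ->
  exists V, mcs Phi V /\ (forall y, X y -> V y) /\ consistent_with V psi.
Proof.
  intros HX HXc. destruct (extend_along L HX HXc) as [V [HXV [HV [HVc Hmax]]]].
  exists V. repeat split; auto.
  - intro Hd. apply HVc. refine (derives_mono _ Hd). auto.
  - intros D HVD HD [y [Hy Hny]].
    (* [negp y] is forced into [V]: otherwise both [y] and [negp y] are refuted. *)
    assert (Hneg : V (negp y)).
    { apply NNPP. intro Hnz. apply HVc.
      pose proof (HD y Hy) as Hpy.
      destruct (Hmax y (Phi_in_L Hpy) Hpy) as [|Hr1]; [contradiction|].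
      destruct (Hmax (negp y) (Phi_in_L (negp_Phi Hpy)) (negp_Phi Hpy)) as [|Hr2];
        [contradiction|].
      exact (derives_sem2 (inconsistent_with_refutes Hr1) (inconsistent_with_refutes Hr2)
        (negp_refutes y)). }
    exact (derives_sem2 (derives_in Hy) (derives_in (HVD _ Hneg)) (negp_contradicts y)).
Qed.

End Lindenbaum.

Section ClosureFinite.
Context {Ag : Type}.
Implicit Types a c f g : form Ag.

Lemma subf_trans a c f : subf a c -> subf c f -> subf a f.
Proof. intros Hac Hcf. induction Hcf; auto using subf. Qed.

Fixpoint subformulas f : list (form Ag) :=
  f :: match f with
       | Atom _ => []
       | Neg a => subformulas a
       | And a b => subformulas a ++ subformulas b
       | Aw _ a | Inf _ a | Ind _ a | Cp _ a | Ex _ a => subformulas a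
       end.

Lemma subf_in_subformulas c f : subf c f -> In c (subformulas f).
Proof.
  induction 1; [destruct c; now left|..]; right; cbn; auto using in_or_app.
Qed.

Variable f0 : form Ag.

(* The closure rules nest [I_i] and [[≈]_i] at most twice over formulas built
   from subformulas of [f0]: [cl_core] collects the formulas created before
   that nesting, and [cl_hull] adds it together with one negation. *)
Inductive cl_core : form Ag -> Prop :=
| core_sub : forall c, subf c f0 -> cl_core c
| core_Aw : forall i c, subf c f0 -> cl_core (Aw i c)
| core_Cp : forall i c, subf c f0 -> cl_core (Cp i c)
| core_Inf_Aw : forall i c, subf c f0 -> cl_core (Inf i (Aw i c))
| core_Inf_Neg_Aw : forall i c, subf c f0 -> cl_core (Inf i (Neg (Aw i c)))
| core_Neg_Aw : forall i c, subf c f0 -> cl_core (Neg (Aw i c))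
| core_Inf_Cp : forall i c, subf c f0 -> cl_core (Inf i (Cp i c))
| core_Ind_Inf_Cp : forall i c, subf c f0 -> cl_core (Ind i (Inf i (Cp i c)))
| core_Ind_Atom : forall i p, subf (Atom p) f0 -> cl_core (Ind i (Atom p)).

Inductive cl_hull : form Ag -> Prop :=
| hull_core : forall f, cl_core f -> cl_hull f
| hull_Neg : forall g, cl_core g -> cl_hull (Neg g)
| hull_Inf_Inf : forall i g, cl_core (Inf i g) -> cl_hull (Inf i (Inf i g))
| hull_Inf_Neg_Inf : forall i g, cl_core (Inf i g) -> cl_hull (Inf i (Neg (Inf i g)))
| hull_Neg_Inf_Inf : forall i g, cl_core (Inf i g) -> cl_hull (Neg (Inf i (Inf i g)))
| hull_Neg_Inf_Neg_Inf : forall i g, cl_core (Inf i g) ->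
    cl_hull (Neg (Inf i (Neg (Inf i g))))
| hull_Ind_Ind : forall i g, cl_core (Ind i g) -> cl_hull (Ind i (Ind i g))
| hull_Ind_Neg_Ind : forall i g, cl_core (Ind i g) -> cl_hull (Ind i (Neg (Ind i g)))
| hull_Neg_Ind_Ind : forall i g, cl_core (Ind i g) -> cl_hull (Neg (Ind i (Ind i g)))
| hull_Neg_Ind_Neg_Ind : forall i g, cl_core (Ind i g) ->
    cl_hull (Neg (Ind i (Neg (Ind i g)))).

(* Only formulas headed by a constructor are inverted: inverting [subf c x] for a
   variable [x] does not terminate. *)
Ltac invert_subf :=
  repeat match goal with
  | H : subf _ (?F _) |- _ => inversion H; subst; clear H
  | H : subf _ (?F _ _) |- _ => inversion H; subst; clear H
  end.

Lemma cl_core_subf c f : cl_core f -> subf c f -> cl_core c.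
Proof.
  intros Hf Hs. destruct Hf; invert_subf; eauto using cl_core, subf_trans.
Qed.

Lemma cl_hull_subf c f : cl_hull f -> subf c f -> cl_hull c.
Proof.
  intros Hf Hs. destruct Hf; invert_subf; eauto using cl_hull, cl_core_subf, subf.
Qed.

Lemma cl_hull_Neg f : cl_hull f -> (forall c, f <> Neg c) -> cl_hull (Neg f).
Proof.
  intros Hf Hnneg. destruct Hf; eauto using cl_hull; exfalso; eapply Hnneg; reflexivity.
Qed.

Lemma cl_hull_arg_subf i c :
  cl_hull (Aw i c) \/ cl_hull (Cp i c) \/ cl_hull (Ex i c) -> subf c f0.
Proof.
  intros [H|[H|H]]; inversion H as [? Hc| | | | | | | | |]; subst; inversion Hc; subst;
    eauto using subf_trans, subf.
Qed.

Lemma cl_hull_Inf_core i f : cl_hull (Inf i f) ->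
  ~ (exists c, f = Inf i c \/ f = Neg (Inf i c)) -> cl_core (Inf i f).
Proof. intros Hf Hn. inversion Hf; subst; auto; exfalso; eauto. Qed.

Lemma cl_hull_Ind_core i f : cl_hull (Ind i f) ->
  ~ (exists c, f = Ind i c \/ f = Neg (Ind i c)) -> cl_core (Ind i f).
Proof. intros Hf Hn. inversion Hf; subst; auto; exfalso; eauto. Qed.

Lemma cl_in_hull f : cl f0 f -> cl_hull f.
Proof.
  induction 1;
    eauto 6 using cl_hull, cl_core, subf, cl_hull_subf, cl_hull_Neg, subf_trans,
      cl_hull_arg_subf, cl_hull_Inf_core, cl_hull_Ind_core.
Qed.

Variable agents : list Ag.
Hypothesis agents_complete : forall i, In i agents.

Definition core_list : list (form Ag) :=
  subformulas f0 ++ flat_map (fun i => flat_map (fun c =>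
    [Aw i c; Cp i c; Inf i (Aw i c); Inf i (Neg (Aw i c)); Neg (Aw i c);
     Inf i (Cp i c); Ind i (Inf i (Cp i c)); Ind i c]) (subformulas f0)) agents.

Definition hull_list : list (form Ag) :=
  core_list ++ map (fun g => Neg g) core_list ++ flat_map (fun i => flat_map (fun g =>
    [Inf i g; Inf i (Neg g); Neg (Inf i g); Neg (Inf i (Neg g));
     Ind i g; Ind i (Neg g); Neg (Ind i g); Neg (Ind i (Neg g))]) core_list) agents.

Lemma cl_core_in_list f : cl_core f -> In f core_list.
Proof.
  intro Hf. apply in_or_app.
  destruct Hf; [left; now apply subf_in_subformulas|..];
    right; apply in_flat_map; exists i; split; auto;
    apply in_flat_map; (eexists; split; [apply subf_in_subformulas; eassumption|]);
    cbn; tauto.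
Qed.

Lemma cl_hull_in_list f : cl_hull f -> In f hull_list.
Proof.
  intro Hf. apply in_or_app.
  destruct Hf; [left; now apply cl_core_in_list|..]; right; apply in_or_app;
    [left; apply in_map; now apply cl_core_in_list|..];
    right; apply in_flat_map; exists i; split; auto;
    apply in_flat_map; (eexists; split; [apply cl_core_in_list; eassumption|]); cbn; tauto.
Qed.

End ClosureFinite.

Lemma cl_finite {Ag : Type} (f0 : form Ag) :
  (exists agents : list Ag, forall i, In i agents) ->
  exists L, forall f, cl f0 f -> In f L.
Proof.
  intros [agents Hagents]. exists (hull_list f0 agents).
  intros f Hf. exact (cl_hull_in_list _ Hagents (cl_in_hull Hf)).
Qed.

Section Truth.
Context {Ag : Type} (f0 : form Ag) (L : list (form Ag)).
Hypothesis cl_in_L : forall f, cl f0 f -> In f L.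
Notation Phi := (cl f0).
Implicit Types a b c f : form Ag.
Implicit Types v w : W Phi.

Lemma cl_Neg_inv f : Phi (Neg f) -> Phi f.
Proof. intro Hf. exact (cl_sub Hf (sf_neg (sf_refl f))). Qed.

Lemma cl_Inf_inv i f : Phi (Inf i f) -> Phi f.
Proof. intro Hf. exact (cl_sub Hf (sf_Inf _ (sf_refl f))). Qed.

Lemma cl_Ind_inv i f : Phi (Ind i f) -> Phi f.
Proof. intro Hf. exact (cl_sub Hf (sf_Ind _ (sf_refl f))). Qed.

Lemma cl_Cp_inv i f : Phi (Cp i f) -> Phi f.
Proof. intro Hf. exact (cl_sub Hf (sf_Cp _ (sf_refl f))). Qed.

Definition wset w : form Ag -> Prop := proj1_sig w.

Lemma wset_mcs w : mcs Phi (wset w).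
Proof. exact (proj2_sig w). Qed.

Lemma wset_cl {w f} : wset w f -> Phi f.
Proof. exact (proj1 (wset_mcs w) f). Qed.

Lemma wset_closed w f : derives (wset w) f -> Phi f -> wset w f.
Proof. apply mcs_closed, wset_mcs. Qed.

Lemma wset_prov {w a b} : wset w a -> prov (Imp a b) -> Phi b -> wset w b.
Proof. intros Ha Hab. apply wset_closed, (derives_prov (derives_in Ha) Hab). Qed.

Lemma wset_iff w a b : prov (Iff a b) -> Phi a -> Phi b -> (wset w a <-> wset w b).
Proof.
  intros Hab Ha Hb. split; intro H; (eapply wset_prov; [exact H| |assumption]);
    refine (prov_sem Hab _); taut.
Qed.

Lemma wset_iff_And w a b c : prov (Iff c (And a b)) -> Phi a -> Phi b -> Phi c ->
  (wset w c <-> wset w a /\ wset w b).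
Proof.
  intros Hiff Ha Hb Hc. split.
  - intro H. split; (eapply wset_prov; [exact H| |assumption]);
      refine (prov_sem Hiff _); taut.
  - intros [H1 H2]. apply wset_closed; [|exact Hc].
    refine (derives_prov (derives_and (derives_in H1) (derives_in H2)) _).
    refine (prov_sem Hiff _); taut.
Qed.

Section Successors.
Variable B : form Ag -> form Ag.
Hypothesis B_nec : forall f, prov f -> prov (B f).
Hypothesis B_K : forall f g, prov (Imp (B (Imp f g)) (Imp (B f) (B g))).
Hypothesis cl_B_inv : forall f, Phi (B f) -> Phi f.

Definition B_succ w v : Prop := forall f, wset w (B f) -> wset v f.

(* If [B c] were not derivable at [w], then [{f | B f in w}] would be consistent
   with [Neg c] and extend to a successor not deriving [c]. *)
Lemma derives_box w c : (forall v, B_succ w v -> derives (wset v) c) -> derives (wset w) (B c).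
Proof.
  intro Hsucc. apply NNPP. intro Hn.
  assert (HX : forall y, wset w (B y) -> Phi y) by eauto using wset_cl.
  assert (HXc : consistent_with (fun y => wset w (B y)) (Neg c)).
  { intro Hd. apply Hn. destruct (derives_ded Hd) as [l [Hl Hp]].
    assert (Hlc : prov (Imp (bigAnd l) c)) by (refine (prov_sem Hp _); taut).
    exists (map B l). split.
    - intros x Hx. apply in_map_iff in Hx as [y [<- Hy]]. auto.
    - refine (prov_sem2 (box_bigAnd B B_nec B_K l) (box_mono B B_nec B_K Hlc) _). taut. }
  destruct (lindenbaum _ _ cl_in_L (@cl_neg _ f0) cl_Neg_inv HX HXc)
    as [V [HV [HXV HVc]]].
  apply (HVc). refine (derives_sem2 (derives_mono _ (Hsucc (exist _ V HV) HXV))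
    (derives_in (or_intror eq_refl)) _); [auto|taut].
Qed.

Lemma box_truth {a w} : Phi (B a) -> (forall v, sat v a <-> wset v a) ->
  ((forall v, B_succ w v -> sat v a) <-> wset w (B a)).
Proof.
  intros HBa IH. split.
  - intro Hsat. apply wset_closed; [|exact HBa]. apply derives_box.
    intros v Hv. apply derives_in, IH, Hsat, Hv.
  - intros HB v Hv. apply IH, Hv, HB.
Qed.

End Successors.

Lemma aw_truth_unary {i a b w} : prov (Iff (Aw i a) (Aw i b)) -> Phi (Aw i b) -> subf a b ->
  (forall p, occurs p b -> occurs p a) ->
  (Phi (Aw i a) -> (wset w (Aw i a) <-> forall p, occurs p a -> awset i w p)) ->
  (wset w (Aw i b) <-> forall p, occurs p b -> awset i w p).
Proof.
  intros Hab Hb Hsub Hocc IH.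
  assert (Ha : Phi (Aw i a)) by exact (cl_A_sub Hb Hsub).
  rewrite <- (wset_iff w Hab Ha Hb), (IH Ha). split; intros H p Hp.
  - exact (H p (Hocc p Hp)).
  - exact (H p (subf_trans Hp Hsub)).
Qed.

Lemma aw_truth {i a} w : Phi (Aw i a) ->
  (wset w (Aw i a) <-> forall p, occurs p a -> awset i w p).
Proof.
  revert w. induction a as [n|a IHa|a IHa b IHb|j a IHa|j a IHa|j a IHa|j a IHa|j a IHa];
    intros w Hphi.
  2,4-8: refine (aw_truth_unary _ Hphi _ _ (IHa w));
    [first [apply ax_A_neg|apply ax_A_A|apply ax_A_I|apply ax_A_Ind|apply ax_A_Cp|apply ax_A_E]
    |auto using subf
    |intros p Hp; inversion Hp; subst; assumption].
  - split; [intros H p Hp; inversion Hp; now subst|intro H; exact (H n (sf_refl _))].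
  - assert (Ha : Phi (Aw i a)) by exact (cl_A_sub Hphi (sf_andl _ (sf_refl a))).
    assert (Hb : Phi (Aw i b)) by exact (cl_A_sub Hphi (sf_andr _ (sf_refl b))).
    rewrite (wset_iff_And w (ax_A_and i a b) Ha Hb Hphi), (IHa w Ha), (IHb w Hb).
    split.
    + intros [H1 H2] p Hp. inversion Hp; subst; auto.
    + intro H. split; intros p Hp; apply H; [exact (sf_andl _ Hp)|exact (sf_andr _ Hp)].
Qed.

Lemma indR_refl i w : indR i w w.
Proof. intros f Hf. exact (wset_prov Hf (ax_Ind_T i f) (cl_Ind_inv (wset_cl Hf))). Qed.

Lemma simR_refl i w : simR i w w.
Proof. intros f Hf. exact (wset_prov Hf (ax_I_T i f) (cl_Inf_inv (wset_cl Hf))). Qed.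

Lemma cpR_refl i w : cpR i w w.
Proof. apply t_step. exists w. split; [apply indR_refl|apply simR_refl]. Qed.

Lemma wset_Cp_unfold {i a w} :
  wset w (Cp i a) -> wset w a /\ wset w (Ind i (Inf i (Cp i a))).
Proof.
  intro H. pose proof (wset_cl H) as HCp.
  split; (eapply wset_prov; [exact H| |eauto using cl_Cp, cl_Cp_inv]);
    refine (prov_sem (ax_Cp_fix i a) _); taut.
Qed.

Lemma wset_Cp_reach {i a w v} : cpR i w v -> wset w (Cp i a) -> wset v (Cp i a).
Proof.
  induction 1 as [w v [t [Hwt Htv]]|]; auto.
  intro H. exact (Htv _ (Hwt _ (proj2 (wset_Cp_unfold H)))).
Qed.

Definition char_list w (l : list (form Ag)) : Prop := forall x, In x l <-> wset w x.

Lemma char_list_derives {w l} : char_list w l -> derives (wset w) (bigAnd l).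
Proof.
  intro Hl. exists l. split; [intro x; apply Hl|]. apply prov_taut_imp. taut.
Qed.

Lemma char_list_prov {w l c} : char_list w l -> derives (wset w) c -> prov (Imp (bigAnd l) c).
Proof.
  intros Hl [l' [Hl' Hp]]. refine (prov_sem Hp _). intro v.
  pose proof (bigAnd_sem_imp l l' (fun x Hx => proj2 (Hl x) (Hl' x Hx)) v). taut.
Qed.

Lemma char_list_cover (P : W Phi -> Prop) : exists S : list (list (form Ag)),
  (forall v, P v -> exists l, In l S /\ char_list v l) /\
  (forall l, In l S -> exists v, P v /\ char_list v l).
Proof.
  destruct (list_filter_prop (fun l => exists v, P v /\ char_list v l) (sublists L))
    as [S HS].
  exists S. split; [|intros l Hl; apply HS, Hl].
  intros v Hv. destruct (sublists_filter_prop (wset v) L) as [l [Hl Hlv]].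
  assert (Hchar : char_list v l).
  { intro x. rewrite Hlv. split; [tauto|]. intro Hx. split; [|exact Hx].
    exact (cl_in_L (wset_cl Hx)). }
  exists l. split; [apply HS; eauto|exact Hchar].
Qed.

Lemma derives_Ind_Inf i w c : (forall u, compR i w u -> derives (wset u) c) ->
  derives (wset w) (Ind i (Inf i c)).
Proof.
  intro Hc.
  apply (derives_box (r_nec_Ind i) (ax_Ind_K i) (@cl_Ind_inv i)). intros t Ht.
  apply (derives_box (r_nec_I i) (ax_I_K i) (@cl_Inf_inv i)). intros u Hu.
  apply Hc. exists t. split; [exact Ht|exact Hu].
Qed.

Lemma wset_Cp_complete i a w : Phi (Cp i a) -> (forall v, cpR i w v -> wset v a) ->
  wset w (Cp i a).
Proof.
  intros HCp Hreach.
  destruct (char_list_cover (cpR i w)) as [S [HS_cover HS_reach]].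
  set (chi := bigOr (map bigAnd S)).
  assert (Hchi : forall v, cpR i w v -> derives (wset v) chi).
  { intros v Hv. destruct (HS_cover v Hv) as [l [HlS Hl]].
    exact (derives_prov (char_list_derives Hl) (bigOr_intro (in_map bigAnd _ _ HlS))). }
  assert (Hchi_a : prov (Imp chi a)).
  { apply bigOr_elim. intros x Hx. apply in_map_iff in Hx as [l [<- HlS]].
    destruct (HS_reach l HlS) as [v [Hv Hl]].
    exact (char_list_prov Hl (derives_in (Hreach v Hv))). }
  assert (Hchi_inv : prov (Imp chi (Ind i (Inf i chi)))).
  { apply bigOr_elim. intros x Hx. apply in_map_iff in Hx as [l [<- HlS]].
    destruct (HS_reach l HlS) as [v [Hv Hl]].
    apply (char_list_prov Hl), derives_Ind_Inf. intros u Hu.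
    exact (Hchi u (t_trans _ _ _ _ _ Hv (t_step _ _ _ _ Hu))). }
  apply wset_closed; [|exact HCp].
  refine (derives_prov (derives_prov (Hchi w (cpR_refl i w)) _) _).
  - exact (r_mp (ax_Cp_ind i chi) (r_nec_Cp i Hchi_inv)).
  - exact (box_mono (Cp i) (r_nec_Cp i) (ax_Cp_K i) Hchi_a).
Qed.

Lemma cp_truth {i a} w : Phi (Cp i a) -> (forall v, sat v a <-> wset v a) ->
  ((forall v, cpR i w v -> sat v a) <-> wset w (Cp i a)).
Proof.
  intros HCp IH. split.
  - intro Hsat. apply (wset_Cp_complete HCp). intros v Hv. apply IH, Hsat, Hv.
  - intros H v Hv. apply IH. exact (proj1 (wset_Cp_unfold (wset_Cp_reach Hv H))).
Qed.

Lemma canonical_truth f : Phi f -> forall w, sat w f <-> wset w f.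
Proof.
  induction f as [n|a IH|a IHa b IHb|i a IH|i a IH|i a IH|i a IH|i a IH];
    intros Hf w; cbn [sat].
  - reflexivity.
  - pose proof (cl_Neg_inv Hf) as Ha.
    rewrite (IH Ha w). symmetry. exact (mcs_neg _ (wset_mcs w) Ha Hf).
  - assert (Ha : Phi a) by exact (cl_sub Hf (sf_andl _ (sf_refl a))).
    assert (Hb : Phi b) by exact (cl_sub Hf (sf_andr _ (sf_refl b))).
    rewrite (IHa Ha w), (IHb Hb w). symmetry.
    apply wset_iff_And; auto. apply ax_taut. taut.
  - symmetry. exact (aw_truth w Hf).
  - exact (box_truth (Inf i) (r_nec_I i) (ax_I_K i) (@cl_Inf_inv i) Hf (IH (cl_Inf_inv Hf))).
  - exact (box_truth (Ind i) (r_nec_Ind i) (ax_Ind_K i) (@cl_Ind_inv i) Hf (IH (cl_Ind_inv Hf))).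
  - exact (cp_truth w Hf (IH (cl_Cp_inv Hf))).
  - pose proof (cl_E_A Hf) as HAw. pose proof (cl_E_Cp Hf) as HCp.
    rewrite (wset_iff_And w (ax_E i a) HAw HCp Hf), <- (aw_truth w HAw).
    rewrite (cp_truth w HCp (IH (cl_Cp_inv HCp))). reflexivity.
Qed.

End Truth.

Theorem lemma12 (Ag : Type) (HAg : exists l : list Ag, forall i, In i l)
  (f0 : form Ag) (w : W (cl f0)) (f : form Ag) :
  cl f0 f -> (sat w f <-> proj1_sig w f).
Proof.
  intro Hf. destruct (cl_finite f0 HAg) as [L HL].
  exact (canonical_truth L HL Hf w).
Qed.
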